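(* Let $G$ be a finite group with identity $e$, and let $\mathcal{B}$ be the set of bases of a rank-$3$ matroid on ground set $G$ invariant under left multiplication by $G$. Let $g,h\in G$ be such that each of the triples $(e,g,gh)$, $(e,g,h)$, $(e,g,g^{-1})$ consists of pairwise distinct elements. If $f_{g,gh}\subseteq\mathcal{B}$, then $f_{g,g^{-1}}\subseteq\mathcal{B}$ or $f_{g,h}\subseteq\mathcal{B}$.
   Context: $G$ acts on $\binom{G}{3}$ by $x\cdot\{a,b,c\}=\{xa,xb,xc\}$. For $g,h\in G$ with $e,g,h$ pairwise distinct, $f_{g,h}=\{\{a,ag,ah\}\mid a\in G\}$ (a $G$-orbit, with $f_{g,h}=f_{h,g}$). A matroid on ground set $G$ is invariant if its set of bases is preserved by this action. *)

From mathcomp Require Import all_boot all_fingroup.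
Set Implicit Arguments. Unset Strict Implicit. Unset Printing Implicit Defensive.
Local Open Scope group_scope.

Definition is_matroid_bases (T : finType) (B : {set {set T}}) : Prop :=
  B != set0 /\
  forall B1 B2, B1 \in B -> B2 \in B ->
    forall x, x \in B1 :\: B2 ->
      exists2 y, y \in B2 :\: B1 & (B1 :\ x) :|: [set y] \in B.

Definition has_rank (T : finType) (B : {set {set T}}) (r : nat) : Prop :=
  forall b, b \in B -> #|b| = r.

Definition lmul_set (gT : finGroupType) (x : gT) (S : {set gT}) : {set gT} :=
  [set x * a | a in S].

Definition invariant_bases (gT : finGroupType) (B : {set {set gT}}) : Prop :=
  forall x b, b \in B -> lmul_set x b \in B.

Definition forb (gT : finGroupType) (g h : gT) : {set {set gT}} :=
  [set [set a; a * g; a * h] | a : gT].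

Definition distinct3 (T : eqType) (a b c : T) : bool :=
  [&& a != b, a != c & b != c].

(* Translating the basis {1, g, gh} by g^-1 gives the basis {g^-1, 1, h}.
   Exchanging gh out of the first against the second yields a basis
   {1, g, y} with y in {g^-1, h}, and the orbit of {1, g, y} is f_{g,y}. *)
From mathcomp Require Import all_boot all_fingroup.
Local Open Scope group_scope.

Lemma lmul_set3 (gT : finGroupType) (a x y z : gT) :
  lmul_set a [set x; y; z] = [set a * x; a * y; a * z].
Proof. by rewrite /lmul_set !imsetU !imset_set1. Qed.

Lemma forb_sub_invariantE {gT : finGroupType} {B : {set {set gT}}} {g k : gT} :
  invariant_bases B -> (forb g k \subset B) <-> [set 1; g; k] \in B.
Proof.
move=> invB; split=> [sub | Bgk].
  by apply: (subsetP sub); apply/imsetP; exists 1 => //; rewrite !mul1g.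
by apply/subsetP => _ /imsetP[a _ ->]; have := invB a _ Bgk; rewrite lmul_set3 mulg1.
Qed.

Lemma exchange_triple {T : finType} {B : {set {set T}}} {a b c : T} {X : {set T}} :
  is_matroid_bases B -> [set a; b; c] \in B -> X \in B ->
  c \notin X -> a != c -> b != c ->
  exists2 y, y \in X :\: [set a; b; c] & [set a; b; y] \in B.
Proof.
move=> [_ exB] Babc BX cX ac bc.
have cD : c \in [set a; b; c] :\: X by rewrite !inE cX eqxx !orbT.
have [y yD Bexch] := exB _ _ Babc BX c cD.
exists y => //; congr (_ \in B): Bexch; apply/setP => z; rewrite !inE.
by case: eqVneq => [->|_] /=; rewrite ?orbF // ![c == _]eq_sym (negbTE ac) (negbTE bc).
Qed.

Theorem mainTheorem9 (gT : finGroupType) (B : {set {set gT}}) (g h : gT) :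
  is_matroid_bases B -> has_rank B 3 -> invariant_bases B ->
  distinct3 1 g (g * h) -> distinct3 1 g h -> distinct3 1 g g^-1 ->
  forb g (g * h) \subset B ->
  forb g g^-1 \subset B \/ forb g h \subset B.
Proof.
move=> matB _ invB /and3P[_ gh1 ghg] /and3P[g1 _ _] _.
move/(forb_sub_invariantE invB) => B1ggh.
have [ghV | ghV] := eqVneq (g * h) g^-1.
  by left; apply/(forb_sub_invariantE invB); rewrite -ghV.
have Bg'1h : [set g^-1; 1; h] \in B.
  by have := invB g^-1 _ B1ggh; rewrite lmul_set3 mulg1 mulVg mulKg.
have ghX : g * h \notin [set g^-1; 1; h].
  rewrite !inE (negbTE ghV) [g * h == 1]eq_sym (negbTE gh1) /=.
  by apply: contra g1 => /eqP ghh; rewrite -(mulgK h g) ghh mulgV.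
have [y] := exchange_triple matB B1ggh Bg'1h ghX gh1 ghg.
rewrite !inE => /andP[yY /orP[/orP[] | ] /eqP yE] B1gy; subst y.
- by left; apply/(forb_sub_invariantE invB).
- by rewrite eqxx in yY.
- by right; apply/(forb_sub_invariantE invB).
Qed.
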